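(* Let $k$ be a field of characteristic $p>0$, $m,n\ge1$, and let $G=\ker(F^n:W_m\to W_m)$, with Hopf algebra $R=k[x_0,\dots,x_{m-1}]/(x_0^{p^n},\dots,x_{m-1}^{p^n})$. For $0\le i\le m$ let $G_i\subseteq G$ be the closed subgroup scheme defined by the ideal $(x_0,\dots,x_{m-i-1})$ (so $G_0=0$, $G_m=G$; $G_i$ is the image of $\ker(F^n:W_i\to W_i)$ under $V^{m-i}$). Let $M$ be a finite-dimensional $R$-comodule with comodule map $c_M$, let $1\le i\le m$, and let $v_{i-1}\in M^{G_{i-1}}\setminus\{0\}$. Let $R_i\subseteq R$ be the subalgebra generated by $x_0,\dots,x_{m-i}$. Then: (1) $c_M(v_{i-1})\in M\otimes R_i$; (2) expand $c_M(v_{i-1})$ in the monomial basis of $R_i$ and let $v_i\otimes x_{m-i}^j$ be the nonzero term whose monomial involves only $x_{m-i}$ (including the constant monomial $x_{m-i}^0$) with $j$ maximal. Then $v_i\in M^{G_i}\setminus\{0\}$.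
   Context: $W_m$ denotes truncated Witt vectors of length $m$ over $k$, $F$ the relative Frobenius $(a_\nu)\mapsto(a_\nu^p)$, $V$ the Verschiebung $(a_0,\dots,a_{m-1})\mapsto(0,a_0,\dots,a_{m-2})$. The comultiplication of $R$ is given by Witt vector addition. An $R$-comodule is a $k$-vector space $M$ with $c_M:M\to M\otimes_kR$ satisfying coassociativity and the counit axiom (equivalently a representation of $G$); for a closed subgroup $H\subseteq G$ with Hopf algebra $R/I$, $M^H=\{w\in M:(\mathrm{id}\otimes\mathrm{pr})c_M(w)=w\otimes1\in M\otimes R/I\}$. *)

From HB Require Import structures.
From mathcomp Require Import all_boot all_order all_algebra.
From mathcomp Require Import mpoly.
Set Implicit Arguments. Unset Strict Implicit. Unset Printing Implicit Defensive.
Import Order.TTheory GRing.Theory Num.Theory.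
Local Open Scope ring_scope.

(* Reduction modulo the monomial ideal (x_0^N, ..., x_{nv-1}^N): keep the
   monomials all of whose exponents are < N.  A polynomial q with
   [trunc N q = q] is the canonical representative of its class. *)
Definition trunc (R : ringType) (nv N : nat) (q : {mpoly R[nv]}) : {mpoly R[nv]} :=
  \sum_(mu <- msupp q | [forall t : 'I_nv, (mu t < N)%N]) q@_mu *: 'X_[mu].

Definition divz_mpoly (nv : nat) (d : int) (q : {mpoly int[nv]}) : {mpoly int[nv]} :=
  \sum_(mu <- msupp q) ((q@_mu %/ d)%Z) *: 'X_[mu].

Definition int_to (R : ringType) (nv : nat) (q : {mpoly int[nv]}) : {mpoly R[nv]} :=
  mmap (fun z : int => (z%:~R : R)%:MP) (fun t => 'X_t) q.

(* Witt vector addition polynomials S_j(x,y) in Z[x_0..x_{m-1},y_0..y_{m-1}]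
   (x_t = 'X_(lshift m t), y_t = 'X_(rshift m t)), characterized by the ghost
   identities  sum_{i<=j} p^i S_i^{p^{j-i}} = w_j(x) + w_j(y)
   with w_j(x) = sum_{i<=j} p^i x_i^{p^{j-i}}.                          *)

Section Witt.
Variables (p m : nat).

Definition wx (t : 'I_m) : {mpoly int[m + m]} := 'X_(lshift m t).
Definition wy (t : 'I_m) : {mpoly int[m + m]} := 'X_(rshift m t).

Definition ghost (X : 'I_m -> {mpoly int[m + m]}) (j : nat) : {mpoly int[m + m]} :=
  \sum_(t < m | (t <= j)%N) (p ^ t)%:R * (X t) ^+ (p ^ (j - t)).

Fixpoint witt_add_seq (j : nat) : seq {mpoly int[m + m]} :=
  match j with
  | 0 => [::]
  | j'.+1 =>
      let l := witt_add_seq j' in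
      rcons l (divz_mpoly (p ^ j')%:Z
        (ghost wx j' + ghost wy j'
         - \sum_(i < j') (p ^ i)%:R * (l`_i) ^+ (p ^ (j' - i))))
  end.

Definition witt_add (t : 'I_m) : {mpoly int[m + m]} := (witt_add_seq m)`_t.

End Witt.

(* The Hopf algebra R = k[x_0..x_{m-1}]/(x_i^{p^n}) of G = ker(F^n : W_m -> W_m),
   elements represented by truncated polynomials (trunc (p^n) q = q);
   R (x) R = k[x_0..x_{m-1}, y_0..y_{m-1}]/(x_i^{p^n}, y_i^{p^n}).        *)

Section Hopf.
Variables (k : fieldType) (p n m : nat).

(* comultiplication (on representatives): x_t |-> S_t(x (x) 1, 1 (x) x) *)
Definition Delta (q : {mpoly k[m]}) : {mpoly k[m + m]} :=
  q \mPo [tuple int_to k (witt_add p t) | t < m].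

(* q (x) 1  and  1 (x) q  in R (x) R *)
Definition inl_mp (q : {mpoly k[m]}) : {mpoly k[m + m]} :=
  q \mPo [tuple 'X_(lshift m t) | t < m].
Definition inr_mp (q : {mpoly k[m]}) : {mpoly k[m + m]} :=
  q \mPo [tuple 'X_(rshift m t) | t < m].

Definition counit (q : {mpoly k[m]}) : k := q.@[fun _ => 0].

(* A finite-dimensional R-comodule M = k^d is given by a d x d matrix C over R:
   c_M(e_a) = sum_b e_b (x) C a b, i.e. c_M(v) = v *m C (M (x) R = R^d).   *)
Definition coaction (d : nat) (C : 'M[{mpoly k[m]}]_d) (v : 'rV[k]_d)
  : 'rV[{mpoly k[m]}]_d := map_mx (fun a => a%:MP) v *m C.

Definition is_comodule (d : nat) (C : 'M[{mpoly k[m]}]_d) : Prop :=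
  [/\ (* entries are elements of R (reduced representatives) *)
      forall a b, trunc (p ^ n) (C a b) = C a b,
      (* counit axiom: (id (x) eps) o c_M = id *)
      forall a b, counit (C a b) = (a == b)%:R &
      (* coassociativity: (id (x) Delta) o c_M = (c_M (x) id) o c_M *)
      forall a b, trunc (p ^ n) (Delta (C a b))
                  = trunc (p ^ n) (\sum_c inl_mp (C c b) * inr_mp (C a c))].

(* projection R -> R/I_i with I_i = (x_0, ..., x_{m-i-1}) (Hopf algebra of G_i),
   on representatives: kill the variables x_0 .. x_{m-i-1}. *)
Definition proj_G (i : nat) (q : {mpoly k[m]}) : {mpoly k[m]} :=
  q \mPo [tuple (if (t < m - i)%N then 0 else 'X_t) | t < m].

(* w \in M^{G_i} :  (id (x) pr) c_M(w) = w (x) 1  in M (x) R/I_i *)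
Definition fixed_by (d : nat) (C : 'M[{mpoly k[m]}]_d) (i : nat) (w : 'rV[k]_d) : Prop :=
  forall b, trunc (p ^ n) (proj_G i (coaction C w 0 b)) = (w 0 b)%:MP.

(* R_i-membership: polynomial in x_0, ..., x_{r} only (here r = m - i). *)
Definition in_sub_vars (r : nat) (q : {mpoly k[m]}) : Prop :=
  q \mPo [tuple (if (t <= r)%N then 'X_t else 0) | t < m] = q.

Definition mono_pow (nu j : nat) : 'X_{1..m} :=
  [multinom (if val t == nu then j else 0) | t < m].

Definition coef_row (d : nat) (C : 'M[{mpoly k[m]}]_d) (v : 'rV[k]_d) (mu : 'X_{1..m})
  : 'rV[k]_d := \row_b (coaction C v 0 b)@_mu.

End Hopf.

(* Specialize the coassociativity identity (id (x) Delta) c_M = (c_M (x) id) c_M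
   along substitutions of the variables x, y of R (x) R that keep only some of
   them.  Such substitutions make the Witt addition polynomials explicit: if x
   lives in coordinates <= r and y in coordinates > r, the Witt sum is the
   concatenation of x and y; if x lives in coordinates >= r and y only in
   coordinate r, the Witt sum vanishes below r and its r-th coordinate is
   x_r + y_r.  Take r = m - i.  The first substitution, together with the
   G_{i-1}-invariance of v (the right factors collapse to the scalars v_c),
   shows that c_M(v) only involves x_0, ..., x_r.  The second one gives
   sum_j w_j (x) (x_r + y_r)^j = sum_j (id (x) pr_i) c_M(w_j) y_r^j, where w_j is
   the coefficient of x_r^j in c_M(v); comparing the coefficients of
   x^nu y_r^J for the largest J with w_J <> 0 yields
   (id (x) pr_i) c_M(w_J) = w_J (x) 1, as only the term j = J reaches y_r^J. *)

From HB Require Import structures.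
From mathcomp Require Import all_boot all_order all_algebra.
From mathcomp Require Import mpoly.
Import Order.TTheory GRing.Theory Num.Theory.
Local Open Scope ring_scope.

Set Implicit Arguments. Unset Strict Implicit. Unset Printing Implicit Defensive.

Section MpolyCoefficients.
Variables (R : nzRingType) (n : nat).
Implicit Types (q : {mpoly R[n]}) (mu : 'X_{1..n}).

Lemma mcoeff_msupp_sum (F : 'X_{1..n} -> R -> R) q mu :
  (forall nu, F nu 0 = 0) ->
  (\sum_(nu <- msupp q) F nu q@_nu *: 'X_[nu])@_mu = F mu q@_mu.
Proof.
move=> F0; rewrite raddf_sum /=.
under eq_bigr => nu _ do rewrite mcoeffZ mcoeffX.
rewrite (eq_bigr (fun nu => if nu == mu then F mu q@_mu else 0)); last first.
  by move=> nu _; case: eqP => [->|_]; rewrite ?mulr1 ?mulr0.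
rewrite -big_mkcond big_const_seq /= count_uniq_mem ?msupp_uniq //.
case: (boolP (mu \in msupp q)) => [_|/memN_msupp_eq0 ->]; last by rewrite F0.
by rewrite /= addr0.
Qed.

Lemma mcoeffE_msupp q mu : q@_mu = \sum_(nu <- msupp q) q@_nu * (nu == mu)%:R.
Proof.
by rewrite {1}[q]mpolyE raddf_sum /=; apply: eq_bigr => nu _; rewrite mcoeffZ mcoeffX.
Qed.

Definition mnm_below N mu := [forall t : 'I_n, (mu t < N)%N].

Lemma mcoeff_trunc N q mu :
  (trunc N q)@_mu = if mnm_below N mu then q@_mu else 0.
Proof.
rewrite /trunc big_mkcond /= -(mcoeff_msupp_sum _ _ (F := fun nu c =>
  if mnm_below N nu then c else 0)); last by move=> nu; case: ifP.
by congr mcoeff; apply: eq_bigr => nu _; rewrite /mnm_below; case: ifP; rewrite ?scale0r.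
Qed.

Lemma trunc_is_linear N : linear (@trunc R n N).
Proof.
move=> c q1 q2; apply/mpolyP => mu.
by rewrite mcoeffD mcoeffZ !mcoeff_trunc mcoeffD mcoeffZ; case: ifP; rewrite ?mulr0 ?addr0.
Qed.

HB.instance Definition _ N := GRing.isLinear.Build R {mpoly R[n]} {mpoly R[n]} _
  (@trunc R n N) (trunc_is_linear N).

Lemma truncZ N c q : trunc N (c *: q) = c *: trunc N q.
Proof.
by apply/mpolyP => mu; rewrite mcoeffZ !mcoeff_trunc mcoeffZ; case: ifP; rewrite ?mulr0.
Qed.

End MpolyCoefficients.

Lemma mcoeff_divz_mpoly n (d : int) (q : {mpoly int[n]}) mu :
  (divz_mpoly d q)@_mu = (q@_mu %/ d)%Z.
Proof. by rewrite (mcoeff_msupp_sum (F := fun _ c => (c %/ d)%Z)) // => _; rewrite div0z. Qed.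

Lemma divz_mpoly_natrM n (d : nat) (q : {mpoly int[n]}) : (0 < d)%N ->
  divz_mpoly d%:Z (d%:R * q) = q.
Proof.
move=> d_gt0; apply/mpolyP => mu; rewrite mcoeff_divz_mpoly mulr_natl mcoeffMn.
by rewrite -mulr_natr natz mulzK // -lt0n.
Qed.

Section Rename.
Variables (R : comNzRingType) (n l : nat) (P : pred 'I_n) (g : 'I_n -> 'I_l).

Definition rename_tuple : n.-tuple {mpoly R[l]} :=
  [tuple (if P t then 'X_(g t) else 0) | t < n].

Definition mnm_push (nu : 'X_{1..n}) : 'X_{1..l} := (\sum_(t < n) U_(g t) *+ nu t)%MM.
Definition mnm_pull (mu : 'X_{1..l}) : 'X_{1..n} :=
  [multinom (if P t then mu (g t) else 0%N) | t < n].

Definition mnm_on (nu : 'X_{1..n}) := [forall t, (nu t != 0%N) ==> P t].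
Definition mnm_in_image (mu : 'X_{1..l}) :=
  [forall u, (mu u != 0%N) ==> [exists t, P t && (g t == u)]].

Lemma mnm_pushE nu u : mnm_push nu u = (\sum_(t < n) (g t == u) * nu t)%N.
Proof. by rewrite mnm_sumE; apply: eq_bigr => t _; rewrite mulmnE mnm1E mulnC. Qed.

Lemma comp_mpolyX_rename nu :
  'X_[nu] \mPo rename_tuple = if mnm_on nu then 'X_[mnm_push nu] else 0.
Proof.
rewrite comp_mpolyX; case: ifP => [nuP | /negbT].
  rewrite -mprodXnE; apply: eq_bigr => t _; rewrite tnth_map tnth_ord_tuple.
  case: ifP => // tNP; move/forallP: nuP => /(_ t).
  by rewrite tNP implybF negbK => /eqP ->; rewrite !expr0.
rewrite negb_forall => /existsP [t]; rewrite negb_imply => /andP [nut tNP].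
by rewrite (bigD1 t) //= tnth_map tnth_ord_tuple (negbTE tNP) expr0n (negbTE nut) mul0r.
Qed.

Lemma mnm_on_pull mu : mnm_on (mnm_pull mu).
Proof. by apply/forallP => t; apply/implyP; rewrite mnmE; case: (P t); rewrite ?eqxx. Qed.

Hypothesis g_inj : {in P &, injective g}.

Lemma mnm_pullK nu : mnm_on nu -> mnm_pull (mnm_push nu) = nu.
Proof.
move=> nuP; apply/mnmP => t; rewrite mnmE.
case: ifP => [tP | tNP]; last first.
  by move/forallP: nuP => /(_ t); rewrite tNP implybF negbK => /eqP ->.
rewrite mnm_pushE (bigD1 t) //= eqxx mul1n big1 ?addn0 // => s st.
case: eqP => [gst|]; last by rewrite mul0n.
case: (eqVneq (nu s) 0%N) => [->|nus]; first by rewrite muln0.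
have sP : P s by move/forallP: nuP => /(_ s); rewrite nus.
by move: st; rewrite (g_inj sP tP gst) eqxx.
Qed.

Lemma mnm_in_image_push nu : mnm_on nu -> mnm_in_image (mnm_push nu).
Proof.
move=> nuP; apply/forallP => u; apply/implyP.
rewrite mnm_pushE sum_nat_eq0 negb_forall => /existsP [t].
rewrite /= muln_eq0 negb_or eqb0 negbK => /andP [gtu nut].
by apply/existsP; exists t; rewrite gtu andbT; move/forallP: nuP => /(_ t); rewrite nut.
Qed.

Lemma mnm_pushK mu : mnm_in_image mu -> mnm_push (mnm_pull mu) = mu.
Proof.
move=> muI; apply/mnmP => u; rewrite mnm_pushE.
case: (eqVneq (mu u) 0%N) => [muu | muu].
  rewrite muu big1 // => t _; rewrite mnmE; case: eqP => [gtu|]; last by rewrite mul0n.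
  by case: ifP; rewrite ?gtu ?muu muln0.
move/forallP: muI => /(_ u); rewrite muu /= => /existsP [t0 /andP [t0P /eqP gt0]].
rewrite (bigD1 t0) //= gt0 eqxx mul1n mnmE t0P gt0 big1 ?addn0 // => t tt0.
case: eqP => [gtu|]; last by rewrite mul0n.
rewrite mnmE; case: ifP => [tP|]; last by rewrite muln0.
by move: tt0; rewrite (g_inj tP t0P (etrans gtu (esym gt0))) eqxx.
Qed.

Lemma mnm_push_eqE nu mu : mnm_on nu ->
  (mnm_push nu == mu) = mnm_in_image mu && (nu == mnm_pull mu).
Proof.
move=> nuP; apply/eqP/andP => [<-|[muI /eqP ->]]; last exact: mnm_pushK.
by rewrite mnm_pullK // mnm_in_image_push.
Qed.

Lemma mcoeff_rename (q : {mpoly R[n]}) mu :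
  (q \mPo rename_tuple)@_mu = if mnm_in_image mu then q@_(mnm_pull mu) else 0.
Proof.
rewrite comp_mpolyEX raddf_sum /=.
under eq_bigr => nu _ do rewrite mcoeffZ comp_mpolyX_rename.
case: ifP => muI.
  rewrite (mcoeffE_msupp q (mnm_pull mu)); apply: eq_bigr => nu _.
  case: ifP => nuP; first by rewrite mcoeffX mnm_push_eqE // muI.
  rewrite mcoeff0; case: eqP => [nu_pull|]; last by rewrite mulr0.
  by move: nuP; rewrite nu_pull mnm_on_pull.
rewrite big1 // => nu _; case: ifP => nuP; last by rewrite mcoeff0 mulr0.
by rewrite mcoeffX mnm_push_eqE // muI mulr0.
Qed.

Lemma trunc_rename N (q : {mpoly R[n]}) : (0 < N)%N ->
  trunc N (q \mPo rename_tuple) = trunc N q \mPo rename_tuple.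
Proof.
move=> N_gt0; apply/mpolyP => mu; rewrite mcoeff_trunc !mcoeff_rename mcoeff_trunc.
case: (boolP (mnm_in_image mu)) => muI; last by case: ifP.
suff -> : mnm_below N mu = mnm_below N (mnm_pull mu) by [].
apply/forallP/forallP => muN t; first by rewrite mnmE; case: ifP.
case: (eqVneq (mu t) 0%N) => [->//|mut].
move/forallP: muI => /(_ t); rewrite mut /= => /existsP [s /andP [sP /eqP gst]].
by have := muN s; rewrite mnmE sP gst.
Qed.

End Rename.

Lemma comp_mpolyA (R : comNzRingType) n l h (q : {mpoly R[n]})
    (lq : n.-tuple {mpoly R[l]}) (lr : l.-tuple {mpoly R[h]}) :
  (q \mPo lq) \mPo lr = q \mPo [tuple tnth lq t \mPo lr | t < n].
Proof.
rewrite [q \mPo lq]comp_mpolyE [RHS]comp_mpolyE raddf_sum /=.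
apply: eq_bigr => nu _; rewrite comp_mpolyZ rmorph_prod /=; congr (_ *: _).
by apply: eq_bigr => t _; rewrite rmorphXn /= tnth_map tnth_ord_tuple.
Qed.

Section KeepVars.
Variables (R : comNzRingType) (n : nat) (P : pred 'I_n).

Definition keep_vars : n.-tuple {mpoly R[n]} := rename_tuple R P id.

Lemma comp_mpolyXU_keep u : ('X_u : {mpoly R[n]}) \mPo keep_vars = if P u then 'X_u else 0.
Proof. by rewrite comp_mpolyXU -tnth_nth tnth_map tnth_ord_tuple. Qed.

Lemma mcoeff_keep_vars (q : {mpoly R[n]}) mu :
  (q \mPo keep_vars)@_mu = if mnm_on P mu then q@_mu else 0.
Proof.
rewrite mcoeff_rename; last exact: in2W (@inj_id _).
have -> : mnm_in_image P id mu = mnm_on P mu.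
  apply/forallP/forallP => muP t; move: (muP t); case: (mu t != 0%N) => //=.
    by case/existsP => s /andP [sP /eqP <-].
  by move=> tP; apply/existsP; exists t; rewrite tP eqxx.
case: ifP => // muP; congr (q@_ _); apply/mnmP => t; rewrite mnmE.
by case: ifP => // tNP; move/forallP: muP => /(_ t); rewrite tNP implybF negbK => /eqP ->.
Qed.

End KeepVars.

Lemma int_toE (R : comNzRingType) n (q : {mpoly int[n]}) : int_to R q = map_mpoly intr q.
Proof. by []. Qed.

Lemma int_toX (R : comNzRingType) n (u : 'I_n) : int_to R 'X_u = 'X_u.
Proof. by rewrite int_toE map_mpolyX. Qed.

Lemma int_to_keep_vars (R : comNzRingType) n (P : pred 'I_n) (q : {mpoly int[n]}) :
  int_to R q \mPo keep_vars R P = int_to R (q \mPo keep_vars int P).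
Proof.
apply/mpolyP => mu; rewrite mcoeff_keep_vars !int_toE.
by rewrite !mcoeff_map_mpoly mcoeff_keep_vars; case: ifP.
Qed.

Lemma divz_mpoly_keep_vars n (P : pred 'I_n) d (q : {mpoly int[n]}) :
  divz_mpoly d q \mPo keep_vars int P = divz_mpoly d (q \mPo keep_vars int P).
Proof.
apply/mpolyP => mu; rewrite mcoeff_keep_vars !mcoeff_divz_mpoly mcoeff_keep_vars.
by case: ifP => //; rewrite div0z.
Qed.

Lemma expr0_pexpn (R : nzRingType) p k : (0 < p)%N -> (0 : R) ^+ (p ^ k) = 0.
Proof. by move=> p_gt0; rewrite expr0n expn_eq0 eqn0Ngt p_gt0. Qed.

Section WittAddition.
Variables (p m : nat).

Definition witt_coord (j : nat) := (witt_add_seq p m j.+1)`_j.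

Lemma size_witt_add_seq j : size (witt_add_seq p m j) = j.
Proof. by elim: j => //= j IHj; rewrite size_rcons IHj. Qed.

Lemma nth_witt_add_seq M j : (j < M)%N -> (witt_add_seq p m M)`_j = witt_coord j.
Proof.
elim: M => // M IHM; rewrite ltnS leq_eqVlt => /orP [/eqP -> //|jM].
by rewrite /= nth_rcons size_witt_add_seq jM IHM.
Qed.

Lemma witt_addE (t : 'I_m) : witt_add p t = witt_coord t.
Proof. exact: nth_witt_add_seq. Qed.

Lemma witt_coordE j : witt_coord j = divz_mpoly (p ^ j)%:Z
  (ghost p (@wx m) j + ghost p (@wy m) j
   - \sum_(i < j) (p ^ i)%:R * witt_coord i ^+ (p ^ (j - i))).
Proof.
rewrite /witt_coord /= nth_rcons size_witt_add_seq ltnn eqxx.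
by congr (divz_mpoly _ (_ - _)); apply: eq_bigr => i _; rewrite nth_witt_add_seq.
Qed.

Variable P : pred 'I_(m + m).
Local Notation kill q := (q \mPo keep_vars int P).

Lemma witt_coord_keep_vars j : kill (witt_coord j) = divz_mpoly (p ^ j)%:Z
  (\sum_(t < m | (t <= j)%N) (p ^ t)%:R
      * (if P (lshift m t) then @wx m t else 0) ^+ (p ^ (j - t))
   + \sum_(t < m | (t <= j)%N) (p ^ t)%:R
      * (if P (rshift m t) then @wy m t else 0) ^+ (p ^ (j - t))
   - \sum_(i < j) (p ^ i)%:R * kill (witt_coord i) ^+ (p ^ (j - i))).
Proof.
rewrite witt_coordE divz_mpoly_keep_vars rmorphB rmorphD /= /ghost.
by congr (divz_mpoly _ (_ + _ - _)); rewrite rmorph_sum; apply: eq_bigr => t _;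
  rewrite rmorphM /= !rmorphXn /= rmorph_nat ?comp_mpolyXU_keep.
Qed.

End WittAddition.

Section WittSplit.
Variables (p m r : nat) (p_gt0 : (0 < p)%N).

Definition head_tail_vars (u : 'I_(m + m)) :=
  if (u < m)%N then (u <= r)%N else (r < u - m)%N.

Lemma head_tail_vars_l t : head_tail_vars (lshift m t) = (t <= r)%N.
Proof. by rewrite /head_tail_vars /= ltn_ord. Qed.

Lemma head_tail_vars_r t : head_tail_vars (rshift m t) = (r < t)%N.
Proof. by rewrite /head_tail_vars /= ltnNge leq_addr /= addKn. Qed.

Definition concat_var (t : 'I_m) := if (t <= r)%N then @wx m t else @wy m t.

Lemma witt_coord_head_tail (t : 'I_m) :
  witt_coord p m t \mPo keep_vars int head_tail_vars = concat_var t.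
Proof.
move: {2}(val t) (erefl (val t)) => j; elim/ltn_ind: j t => j IHj t tj.
rewrite witt_coord_keep_vars -big_split /=.
rewrite (eq_bigr (fun s : 'I_m => (p ^ s)%:R * concat_var s ^+ (p ^ (t - s)))); last first.
  move=> s _; rewrite head_tail_vars_l head_tail_vars_r /concat_var ltnNge.
  by case: (s <= r)%N; rewrite /= expr0_pexpn // mulr0 ?addr0 ?add0r.
rewrite (big_ord_widen _ (fun i => (p ^ i)%:R * (witt_coord p m i
  \mPo keep_vars int head_tail_vars) ^+ (p ^ (t - i))) (ltnW (ltn_ord t))).
rewrite [X in _ - X](eq_bigr (fun s : 'I_m => (p ^ s)%:R * concat_var s ^+ (p ^ (t - s))));
  last by move=> s st; rewrite (IHj s) // -tj.
rewrite (bigD1 t) //= (eq_bigl (fun s : 'I_m => (s < t)%N)); last first.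
  by move=> s /=; rewrite ltn_neqAle andbC.
by rewrite addrK subnn expn0 expr1 divz_mpoly_natrM // expn_gt0 p_gt0.
Qed.

End WittSplit.

Section WittPivot.
Variables (p m r : nat) (p_gt0 : (0 < p)%N) (r_lt_m : (r < m)%N).

Definition pivot_vars (u : 'I_(m + m)) :=
  if (u < m)%N then (r <= u)%N else (u == m + r :> nat).

Lemma pivot_vars_l t : pivot_vars (lshift m t) = (r <= t)%N.
Proof. by rewrite /pivot_vars /= ltn_ord. Qed.

Lemma pivot_vars_r t : pivot_vars (rshift m t) = (t == r :> nat).
Proof. by rewrite /pivot_vars /= ltnNge leq_addr /= eqn_add2l. Qed.

Local Notation kill q := (q \mPo keep_vars int pivot_vars).

Lemma witt_coord_pivot_low j : (j < r)%N -> kill (witt_coord p m j) = 0.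
Proof.
elim/ltn_ind: j => j IHj jr; rewrite witt_coord_keep_vars.
rewrite big1 => [|t tj]; last first.
  by rewrite pivot_vars_l leqNgt (leq_ltn_trans tj jr) expr0_pexpn // mulr0.
rewrite big1 => [|t tj]; last first.
  rewrite pivot_vars_r; case: eqP => [tr|_]; last by rewrite expr0_pexpn // mulr0.
  by move: jr; rewrite -tr ltnNge tj.
rewrite big1 => [|i _]; first by rewrite addr0 subrr; apply/mpolyP => mu;
  rewrite mcoeff_divz_mpoly !mcoeff0 div0z.
by rewrite IHj ?expr0_pexpn ?mulr0 // (ltn_trans _ jr).
Qed.

Lemma witt_coord_pivot :
  kill (witt_coord p m r) = @wx m (Ordinal r_lt_m) + @wy m (Ordinal r_lt_m).
Proof.
rewrite witt_coord_keep_vars.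
rewrite [X in _ - X]big1 ?subr0 => [|i _]; last first.
  by rewrite witt_coord_pivot_low // expr0_pexpn // mulr0.
have other (t : 'I_m) : (t <= r)%N -> t != Ordinal r_lt_m -> (t < r)%N.
  by move=> tr; apply: contraNT; rewrite -leqNgt => rt; apply/eqP/val_inj/eqP;
    rewrite eqn_leq tr.
rewrite (bigD1 (Ordinal r_lt_m)) //= big1 ?addr0 => [|t /andP [tr tNr]]; last first.
  by rewrite pivot_vars_l leqNgt other // expr0_pexpn // mulr0.
rewrite (bigD1 (Ordinal r_lt_m)) //= big1 ?addr0 => [|t /andP [tr tNr]]; last first.
  by rewrite pivot_vars_r ltn_eqF ?other // expr0_pexpn // mulr0.
rewrite pivot_vars_l pivot_vars_r leqnn eqxx subnn expn0 !expr1 -mulrDr.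
by rewrite divz_mpoly_natrM // expn_gt0 p_gt0.
Qed.

End WittPivot.

Section PivotSubstitution.
Variables (R : comNzRingType) (m l r : nat) (r_lt_m : (r < m)%N).
Local Notation ro := (Ordinal r_lt_m).

Definition pivot_tuple (Z : {mpoly R[l]}) : m.-tuple {mpoly R[l]} :=
  [tuple if val t == r then Z else 0 | t < m].

Lemma mono_pow_pivot j : mono_pow m r j ro = j.
Proof. by rewrite mnmE /= eqxx. Qed.

Lemma comp_mpolyX_pivot Z (mu : 'X_{1..m}) :
  'X_[mu] \mPo pivot_tuple Z = if mu == mono_pow m r (mu ro) then Z ^+ mu ro else 0.
Proof.
have tNr (t : 'I_m) : t != ro -> (val t == r) = false.
  by move=> tr; apply: contraNF tr => /eqP tr; apply/eqP/val_inj.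
rewrite comp_mpolyX (bigD1 ro) //= tnth_map tnth_ord_tuple /= eqxx.
case: eqP => [mu_mono | mu_not_mono].
  rewrite big1 ?mulr1 // => t tr; rewrite tnth_map tnth_ord_tuple tNr //.
  by rewrite mu_mono mnmE tNr // expr0.
have [t /andP [tr mut]] : exists t, (t != ro) && (mu t != 0%N).
  apply/existsP; apply: contraT; rewrite negb_exists => /forallP mu0; case: mu_not_mono.
  apply/mnmP => t; rewrite mnmE; have [tr|] := eqVneq t ro; first by rewrite tr eqxx.
  by move=> /[dup] /tNr -> tr; move: (mu0 t); rewrite tr negbK => /eqP.
by rewrite (bigD1 t) //= tnth_map tnth_ord_tuple tNr // expr0n (negbTE mut) mul0r mulr0.
Qed.

Lemma comp_pivot_truncated N (q : {mpoly R[m]}) Z : trunc N q = q ->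
  q \mPo pivot_tuple Z = \sum_(j < N) q@_(mono_pow m r j) *: Z ^+ j.
Proof.
move=> qN; rewrite comp_mpolyEX.
under [RHS]eq_bigr => j _ do rewrite (mcoeffE_msupp q) scaler_suml.
rewrite exchange_big /=; apply: eq_big_seq => mu mu_q; rewrite comp_mpolyX_pivot.
have muN : mnm_below N mu.
  by apply: contraT => muN; move: mu_q; rewrite mcoeff_msupp -qN mcoeff_trunc (negbTE muN) eqxx.
have mono_eqE j : (mu == mono_pow m r j) = (mu == mono_pow m r (mu ro)) && (mu ro == j).
  by apply/eqP/andP => [->|[/eqP mu_mono /eqP <- //]]; rewrite mono_pow_pivot !eqxx.
case: eqP => [mu_mono | /eqP mu_not_mono]; last first.
  by rewrite scaler0 big1 // => j _; rewrite mono_eqE (negbTE mu_not_mono) mulr0 scale0r.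
have muN' : (mu ro < N)%N by move/forallP: muN.
rewrite (bigD1 (Ordinal muN')) //= big1 ?addr0 => [|j jN].
  by rewrite -mu_mono eqxx mulr1.
rewrite mono_eqE -mu_mono eqxx /=.
by rewrite (_ : (mu ro == j) = false) ?mulr0 ?scale0r //; apply: contraNF jN => /eqP muj;
  apply/eqP/val_inj.
Qed.

End PivotSubstitution.

Lemma mcoeffMX_lep (R : comNzRingType) n (q : {mpoly R[n]}) nu mu :
  (q * 'X_[nu])@_mu = if (nu <= mu)%MM then q@_(mu - nu)%MM else 0.
Proof.
case: ifP => [num | numN]; first by rewrite -{1}(submK num) addmC mcoeffMX.
apply: memN_msupp_eq0; rewrite (perm_mem (msuppMX _ _)).
apply/mapP => [[nu' _ mu_sum]]; move/negP: numN; apply.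
by rewrite mu_sum lem_addr.
Qed.

Lemma mcoeff_binom (R : comNzRingType) n (u1 u2 : 'I_n) (mu : 'X_{1..n}) j J :
  u1 != u2 -> (j <= J)%N -> mu u2 = J ->
  (('X_u1 + 'X_u2 : {mpoly R[n]}) ^+ j)@_mu = ((j == J) && (mu == U_(u2) *+ J)%MM)%:R.
Proof.
move=> u12 jJ muJ; rewrite exprDn raddf_sum /=.
under eq_bigr => i _ do rewrite mcoeffMn !mpolyXn -mpolyXD mcoeffX.
have [-> {j jJ}|jNJ] := eqVneq j J; last first.
  rewrite big1 // => i _; case: eqP => [mu_i|]; last by rewrite mul0rn.
  case/negP: jNJ.
  move: muJ; rewrite -mu_i mnmDE !mulmnE !mnm1E (negbTE u12) eqxx mul0n mul1n add0n => iJ.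
  by rewrite eqn_leq jJ -iJ -ltnS ltn_ord.
rewrite (bigD1 ord_max) //= subnn mulm0n add0m eq_sym binn mulr1n big1 ?addr0 // => i iJ.
case: eqP => [mu_i|]; last by rewrite mul0rn.
case/eqP: iJ; apply/val_inj => /=; apply/eqP.
by move: muJ; rewrite -mu_i mnmDE !mulmnE !mnm1E (negbTE u12) eqxx mul0n mul1n add0n => ->.
Qed.

Section TensorMonomials.
Variable m : nat.

Lemma lrshift_eqF (s t : 'I_m) : (lshift m s == rshift m t) = false.
Proof.
by apply/negbTE/negP => /eqP /(congr1 val) /= st; move: (ltn_ord s); rewrite st ltnNge leq_addr.
Qed.

Definition mnm_xy (nu : 'X_{1..m}) (s : 'I_m) J : 'X_{1..m + m} :=
  (mnm_push (lshift m) nu + U_(rshift m s) *+ J)%MM.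

Lemma mnm_xy_l nu s J t : mnm_xy nu s J (lshift m t) = nu t.
Proof.
rewrite mnmDE mulmnE mnm1E eq_sym lrshift_eqF mul0n addn0 mnm_pushE.
rewrite (bigD1 t) //= eqxx mul1n big1 ?addn0 // => t' /negbTE.
by rewrite (inj_eq (@lshift_inj _ _)) => ->.
Qed.

Lemma mnm_xy_r nu s J t : mnm_xy nu s J (rshift m t) = ((s == t) * J)%N.
Proof.
rewrite mnmDE mulmnE mnm1E (inj_eq (@rshift_inj _ _)) mulnC mnm_pushE big1 // => t' _.
by rewrite lrshift_eqF.
Qed.

Lemma mnm_in_image_xy_sub nu s J j : (j < J)%N ->
  mnm_in_image predT (lshift m) (mnm_xy nu s J - U_(rshift m s) *+ j)%MM = false.
Proof.
move=> jJ; apply/negbTE/negP => /forallP /(_ (rshift m s)).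
rewrite mnmBE mnm_xy_r eqxx mul1n mulmnE mnm1E eqxx mul1n subn_eq0 leqNgt jJ /=.
by case/existsP => t; rewrite lrshift_eqF.
Qed.

Lemma mnm_xy_eqE nu s J : (mnm_xy nu s J == U_(rshift m s) *+ J)%MM = (nu == 0%MM).
Proof.
apply/eqP/eqP => [xyJ | ->].
  by apply/mnmP => t; rewrite mnm0E -(mnm_xy_l nu s J) xyJ mulmnE mnm1E eq_sym lrshift_eqF mul0n.
apply/mnmP => u; rewrite -(splitK u); case: (split u) => t /=.
  by rewrite mnm_xy_l mnm0E mulmnE mnm1E eq_sym lrshift_eqF mul0n.
by rewrite mnm_xy_r mulmnE mnm1E (inj_eq (@rshift_inj _ _)) mulnC.
Qed.

Lemma mnm_below_xy N nu s J : mnm_below N nu -> (J < N)%N -> mnm_below N (mnm_xy nu s J).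
Proof.
move=> /forallP nuN JN; apply/forallP => u; rewrite -(splitK u).
case: (split u) => t /=; first by rewrite mnm_xy_l.
by rewrite mnm_xy_r; case: (s == t); rewrite ?mul1n ?mul0n // (leq_ltn_trans _ JN).
Qed.

End TensorMonomials.

Lemma mcoeff_inl_mulXr (k : fieldType) m (q : {mpoly k[m]}) s j nu J :
  (inl_mp q * 'X_(rshift m s) ^+ j)@_(mnm_xy nu s J) = if j == J then q@_nu else 0.
Proof.
have lshift_inj' : {in predT &, injective (@lshift m m)} := in2W (@lshift_inj _ _).
have nu_on : mnm_on predT nu by apply/forallP => t; rewrite implybT.
rewrite mpolyXn mcoeffMX_lep.
have [-> | jNJ] := eqVneq j J.
  have -> : (U_(rshift m s) *+ J <= mnm_xy nu s J)%MM by rewrite /mnm_xy addmC lem_addr.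
  rewrite addmK.
  by rewrite (mcoeff_rename lshift_inj') mnm_in_image_push // mnm_pullK.
case: ifP => // jxy; case: (ltngtP j J) jNJ => // [jJ _ | Jj _].
  by rewrite (mcoeff_rename lshift_inj') mnm_in_image_xy_sub.
move/mnm_lepP: jxy => /(_ (rshift m s)).
by rewrite mulmnE mnm1E eqxx mul1n mnm_xy_r eqxx mul1n leqNgt Jj.
Qed.

Lemma mcoeff_sum_inl_mulXr (k : fieldType) m N (Q : nat -> {mpoly k[m]}) s nu J :
  (J < N)%N ->
  (\sum_(j < N) inl_mp (Q j) * 'X_(rshift m s) ^+ j)@_(mnm_xy nu s J) = (Q J)@_nu.
Proof.
move=> JN; rewrite raddf_sum (bigD1 (Ordinal JN)) //= mcoeff_inl_mulXr eqxx big1 ?addr0 //.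
by move=> j jJ; rewrite mcoeff_inl_mulXr ifN // -(inj_eq val_inj).
Qed.

Lemma mcoeff_sum_binom (R : comNzRingType) n (u1 u2 : 'I_n) N (a : nat -> R) (mu : 'X_{1..n}) J :
  u1 != u2 -> (J < N)%N -> mu u2 = J -> (forall j, (J < j)%N -> a j = 0) ->
  (\sum_(j < N) a j *: ('X_u1 + 'X_u2 : {mpoly R[n]}) ^+ j)@_mu
  = a J * (mu == U_(u2) *+ J)%MM%:R.
Proof.
move=> u12 JN muJ a_top; rewrite raddf_sum (bigD1 (Ordinal JN)) //= mcoeffZ.
rewrite (mcoeff_binom _ u12 (leqnn J) muJ) eqxx big1 ?addr0 // => j jJ; rewrite mcoeffZ.
have [Jj | jJ'] := ltnP J j; first by rewrite a_top ?mul0r.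
rewrite (mcoeff_binom _ u12 jJ' muJ) (_ : (j == J :> nat) = false) ?mulr0 //.
by apply: contraNF jJ => /eqP jJ; apply/eqP/val_inj.
Qed.

Section WittComultiplication.
Variables (k : fieldType) (p m r : nat) (p_gt0 : (0 < p)%N).

Definition split_var (t : 'I_m) : 'I_(m + m) :=
  if (t <= r)%N then lshift m t else rshift m t.

Lemma split_var_inj : {in predT &, injective split_var}.
Proof.
move=> s t _ _; rewrite /split_var.
case: ifP => _; case: ifP => _ /(congr1 val) /= st; apply: val_inj => //.
- by move: (ltn_ord s); rewrite st ltnNge leq_addr.
- by move: (ltn_ord t); rewrite -st ltnNge leq_addr.
- by move/eqP: st; rewrite eqn_add2l => /eqP.
Qed.

Lemma Delta_head_tail (q : {mpoly k[m]}) :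
  Delta p q \mPo keep_vars k (@head_tail_vars m r) = q \mPo rename_tuple k predT split_var.
Proof.
rewrite /Delta comp_mpolyA; congr comp_mpoly; apply: eq_from_tnth => t.
rewrite !tnth_map !tnth_ord_tuple int_to_keep_vars witt_addE witt_coord_head_tail //.
by rewrite /concat_var /split_var; case: ifP => _; rewrite int_toX.
Qed.

Hypothesis r_lt_m : (r < m)%N.
Local Notation ro := (Ordinal r_lt_m).

Lemma Delta_pivot (q : {mpoly k[m]}) : in_sub_vars r q ->
  Delta p q \mPo keep_vars k (@pivot_vars m r)
  = q \mPo pivot_tuple m r ('X_(lshift m ro) + 'X_(rshift m ro)).
Proof.
move=> q_sub; rewrite -{1}q_sub /Delta !comp_mpolyA; congr comp_mpoly.
apply: eq_from_tnth => t; rewrite !tnth_map !tnth_ord_tuple /=.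
case: ltngtP => tr; rewrite ?comp_mpoly0 // comp_mpolyXU -tnth_nth !tnth_map !tnth_ord_tuple.
  by rewrite int_to_keep_vars witt_addE witt_coord_pivot_low // int_toE rmorph0.
have -> : t = ro by apply: val_inj.
by rewrite int_to_keep_vars witt_addE witt_coord_pivot // int_toE rmorphD /= -!int_toE !int_toX.
Qed.

End WittComultiplication.

Section Comodule.
Variables (k : fieldType) (p n m d : nat) (C : 'M[{mpoly k[m]}]_d).
Hypothesis C_comodule : is_comodule p n C.
Local Notation N := (p ^ n)%N.

Lemma coactionE (w : 'rV[k]_d) b : coaction C w 0 b = \sum_a w 0 a *: C a b.
Proof. by rewrite !mxE; apply: eq_bigr => a _; rewrite mxE mul_mpolyC. Qed.

Lemma trunc_coaction (w : 'rV[k]_d) b : trunc N (coaction C w 0 b) = coaction C w 0 b.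
Proof.
case: C_comodule => C_trunc _ _; rewrite coactionE linear_sum /=.
by apply: eq_bigr => a _; rewrite truncZ C_trunc.
Qed.

Lemma coassoc_coaction (w : 'rV[k]_d) b :
  trunc N (Delta p (coaction C w 0 b))
  = trunc N (\sum_c inl_mp (C c b) * inr_mp (coaction C w 0 c)).
Proof.
case: C_comodule => _ _ C_coassoc.
rewrite coactionE /Delta [X in trunc _ X]linear_sum /= linear_sum /=.
under eq_bigr => a _ do rewrite comp_mpolyZ truncZ C_coassoc -truncZ.
rewrite -linear_sum; congr trunc.
under [RHS]eq_bigr => c _ do rewrite coactionE /inr_mp linear_sum mulr_sumr.
rewrite exchange_big /=; apply: eq_bigr => a _; rewrite scaler_sumr.
by apply: eq_bigr => c _; rewrite linearZ /= scalerAr.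
Qed.

Lemma counitE (q : {mpoly k[m]}) : counit q = q@_0%MM.
Proof.
rewrite /counit mevalE (mcoeffE_msupp q 0%MM); apply: eq_bigr => mu _; congr (_ * _).
have [->|/eqP mu0] := eqVneq mu 0%MM; first by rewrite big1 // => t _; rewrite mnm0E expr0.
have [t mut] : exists t, mu t != 0%N.
  apply/existsP; apply: contraT; rewrite negb_exists => /forallP mu_t0; case: mu0.
  by apply/mnmP => t; rewrite mnm0E; move: (mu_t0 t); rewrite negbK => /eqP.
by rewrite (bigD1 t) //= expr0n (negbTE mut) mul0r.
Qed.

Lemma coef_row0 (w : 'rV[k]_d) : coef_row C w 0%MM = w.
Proof.
case: C_comodule => _ C_counit _; apply/rowP => b; rewrite mxE coactionE raddf_sum /=.
rewrite (bigD1 b) //= big1 ?addr0 => [|a ab]; rewrite mcoeffZ -counitE C_counit.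
  by rewrite eqxx mulr1.
by rewrite (negbTE ab) mulr0.
Qed.

Lemma coef_row_truncated (w : 'rV[k]_d) r j : (r < m)%N -> (N <= j)%N ->
  coef_row C w (mono_pow m r j) = 0.
Proof.
move=> r_lt_m Nj; apply/rowP => b; rewrite [LHS]mxE [RHS]mxE -trunc_coaction mcoeff_trunc.
case: ifP => // /forallP /(_ (Ordinal r_lt_m)).
by rewrite mono_pow_pivot ltnNge Nj.
Qed.

End Comodule.

Lemma proj_G_keep_vars (k : fieldType) m j (q : {mpoly k[m]}) :
  proj_G j q = q \mPo keep_vars k (fun t : 'I_m => ~~ (t < m - j)%N).
Proof.
congr comp_mpoly; apply: eq_from_tnth => t.
by rewrite !tnth_map !tnth_ord_tuple; case: ifP.
Qed.

Definition merge_tuple (R : comNzRingType) m : (m + m).-tuple {mpoly R[m]} :=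
  [tuple match split u with inl t => 'X_t | inr t => 'X_t end | u < m + m].

Lemma merge_tuple_l (R : comNzRingType) m (t : 'I_m) :
  tnth (merge_tuple R m) (lshift m t) = 'X_t.
Proof. by rewrite tnth_map tnth_ord_tuple (unsplitK (inl t)). Qed.

Lemma merge_tuple_r (R : comNzRingType) m (t : 'I_m) :
  tnth (merge_tuple R m) (rshift m t) = 'X_t.
Proof. by rewrite tnth_map tnth_ord_tuple (unsplitK (inr t)). Qed.

Section FixedVectors.
Variables (k : fieldType) (p n m d : nat) (C : 'M[{mpoly k[m]}]_d).
Hypotheses (C_comodule : is_comodule p n C) (p_gt0 : (0 < p)%N).
Variables (i : nat) (v : 'rV[k]_d).
Hypotheses (i_range : (1 <= i <= m)%N) (v_fixed : fixed_by p n C (i - 1) v).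
Local Notation N := (p ^ n)%N.
Local Notation r := (m - i)%N.
Local Notation f c := (coaction C v 0 c).

Let N_gt0 : (0 < N)%N. Proof. by rewrite expn_gt0 p_gt0. Qed.

Let r_lt_m : (r < m)%N.
Proof. by case/andP: i_range => i_gt0 im; rewrite ltn_subrL i_gt0 (leq_trans i_gt0). Qed.

Lemma proj_G_coaction c : proj_G (i - 1) (f c) = (v 0 c)%:MP.
Proof.
by have := v_fixed c; rewrite proj_G_keep_vars trunc_rename ?N_gt0 ?trunc_coaction.
Qed.

Lemma inr_coaction_head_tail c :
  inr_mp (f c) \mPo keep_vars k (@head_tail_vars m r) = (v 0 c)%:MP.
Proof.
rewrite -(comp_mpolyC _ [tuple ('X_(rshift m t) : {mpoly k[m + m]}) | t < m]).
rewrite -proj_G_coaction /inr_mp proj_G_keep_vars !comp_mpolyA; congr comp_mpoly.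
apply: eq_from_tnth => t; rewrite !tnth_map !tnth_ord_tuple comp_mpolyXU_keep head_tail_vars_r.
have -> : ~~ (t < m - (i - 1))%N = (r < t)%N.
  case/andP: i_range => i_gt0 im.
  by rewrite -leqNgt subnBA // addnC -addnBA // add1n.
by case: ifP => _; rewrite ?comp_mpoly0 // comp_mpolyXU -tnth_nth tnth_map tnth_ord_tuple.
Qed.

Lemma inl_head_tail (q : {mpoly k[m]}) :
  inl_mp q \mPo keep_vars k (@head_tail_vars m r)
  = q \mPo rename_tuple k (fun t : 'I_m => (t <= r)%N) (lshift m).
Proof.
rewrite comp_mpolyA; congr comp_mpoly; apply: eq_from_tnth => t.
by rewrite !tnth_map !tnth_ord_tuple comp_mpolyXU_keep head_tail_vars_l.
Qed.

Lemma coaction_head_tail b :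
  f b \mPo rename_tuple k predT (@split_var m r)
  = f b \mPo rename_tuple k (fun t : 'I_m => (t <= r)%N) (lshift m).
Proof.
set low := rename_tuple k (fun t : 'I_m => (t <= r)%N) (lshift m).
have low_coaction : \sum_c v 0 c *: (C c b \mPo low) = f b \mPo low.
  by rewrite coactionE linear_sum; apply: eq_bigr => c _; rewrite linearZ.
have := congr1 (comp_mpoly (keep_vars k (@head_tail_vars m r))) (coassoc_coaction C_comodule v b).
rewrite -!trunc_rename ?N_gt0 // Delta_head_tail // rmorph_sum /=.
under eq_bigr => c _ do rewrite rmorphM /= inr_coaction_head_tail mulrC mul_mpolyC inl_head_tail.
rewrite low_coaction !trunc_rename ?N_gt0 ?trunc_coaction //.
  exact: in2W (@lshift_inj _ _).
exact: split_var_inj.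
Qed.

Lemma coaction_in_sub_vars b : in_sub_vars r (f b).
Proof.
have := congr1 (comp_mpoly (merge_tuple k m)) (coaction_head_tail b).
rewrite !comp_mpolyA; set lhs := [tuple _ | t < m]; set rhs := [tuple _ | t < m].
have -> : lhs = [tuple 'X_t | t < m].
  apply: eq_from_tnth => t; rewrite !tnth_map !tnth_ord_tuple /split_var /=.
  by case: ifP => _; rewrite comp_mpolyXU -tnth_nth ?merge_tuple_l ?merge_tuple_r.
have -> : rhs = [tuple if (t <= r)%N then 'X_t else 0 | t < m].
  apply: eq_from_tnth => t; rewrite !tnth_map !tnth_ord_tuple /=.
  case: ifP => _; last by rewrite comp_mpoly0.
  by rewrite comp_mpolyXU -tnth_nth merge_tuple_l.
by rewrite comp_mpoly_id => /esym.
Qed.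

Local Notation ro := (Ordinal r_lt_m).
Local Notation xr := (lshift m ro).
Local Notation yr := (rshift m ro).
Local Notation w j := (coef_row C v (mono_pow m r j)).

Lemma inr_pivot (q : {mpoly k[m]}) :
  inr_mp q \mPo keep_vars k (@pivot_vars m r) = q \mPo pivot_tuple m r 'X_yr.
Proof.
rewrite comp_mpolyA; congr comp_mpoly; apply: eq_from_tnth => t.
rewrite !tnth_map !tnth_ord_tuple comp_mpolyXU_keep pivot_vars_r.
by case: eqP => // tr; congr 'X__; apply: val_inj; rewrite /= tr.
Qed.

Lemma inl_pivot (q : {mpoly k[m]}) :
  inl_mp q \mPo keep_vars k (@pivot_vars m r) = inl_mp (proj_G i q).
Proof.
rewrite /inl_mp /proj_G !comp_mpolyA; congr comp_mpoly; apply: eq_from_tnth => t.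
rewrite !tnth_map !tnth_ord_tuple comp_mpolyXU_keep pivot_vars_l.
by case: ltnP => _; rewrite ?comp_mpoly0 // comp_mpolyXU -tnth_nth tnth_map tnth_ord_tuple.
Qed.

Lemma coassoc_pivot b :
  trunc N (\sum_(j < N) (f b)@_(mono_pow m r j) *: ('X_xr + 'X_yr) ^+ j)
  = trunc N (\sum_(j < N) inl_mp (proj_G i (coaction C (w j) 0 b)) * 'X_yr ^+ j).
Proof.
have := congr1 (comp_mpoly (keep_vars k (@pivot_vars m r))) (coassoc_coaction C_comodule v b).
rewrite -!trunc_rename ?N_gt0 // (Delta_pivot p_gt0 r_lt_m (coaction_in_sub_vars b)).
rewrite (comp_pivot_truncated r_lt_m _ (trunc_coaction C_comodule v b)) => ->; congr trunc.
rewrite rmorph_sum /=.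
under eq_bigr => c _ do rewrite rmorphM /= inr_pivot inl_pivot
  (comp_pivot_truncated r_lt_m _ (trunc_coaction C_comodule v c)) mulr_sumr.
rewrite exchange_big /=; apply: eq_bigr => j _.
rewrite coactionE /proj_G [X in inl_mp X]linear_sum /inl_mp linear_sum mulr_suml /=.
by apply: eq_bigr => c _; rewrite !comp_mpolyZ -scalerAl -scalerAr [w j 0 c]mxE.
Qed.

Lemma fixed_by_top_coef_row J : w J != 0 ->
  (forall j, (J < j)%N -> w j = 0) -> fixed_by p n C i (w J).
Proof.
move=> wJ0 w_top b.
have JN : (J < N)%N.
  by rewrite ltnNge; apply: contra wJ0 => NJ; rewrite (coef_row_truncated C_comodule) // r_lt_m.
set Q := proj_G i (coaction C (w J) 0 b).
have Q_trunc : trunc N Q = Q.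
  by rewrite /Q proj_G_keep_vars trunc_rename ?N_gt0 // trunc_coaction.
rewrite -/Q Q_trunc [w J 0 b]mxE; apply/mpolyP => nu.
have [nuN | nuNN] := boolP (mnm_below N nu); last first.
  rewrite -Q_trunc mcoeff_trunc (negbTE nuNN) mcoeffC.
  have [nu0|] := eqVneq nu 0%MM; last by rewrite mulr0.
  by case/negP: nuNN; rewrite nu0; apply/forallP => t; rewrite mnm0E N_gt0.
have := congr1 (mcoeff (mnm_xy nu ro J)) (coassoc_pivot b).
rewrite !mcoeff_trunc mnm_below_xy //.
rewrite (@mcoeff_sum_inl_mulXr _ _ _ (fun j => proj_G i (coaction C (w j) 0 b))) //.
rewrite (@mcoeff_sum_binom _ _ _ _ _ (fun j => (f b)@_(mono_pow m r j)) _ _ _ JN)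
  ?lrshift_eqF ?mnm_xy_r ?eqxx ?mul1n //.
  by rewrite mnm_xy_eqE mcoeffC => ->.
move=> j Jj; have /rowP/(_ b) wj0 := w_top _ Jj.
by rewrite mxE in wj0; rewrite wj0 mxE.
Qed.

Lemma exists_top_coef_row : v != 0 ->
  exists J, w J != 0 /\ forall j, (J < j)%N -> w j = 0.
Proof.
move=> v0; have w0 : exists j, w j != 0.
  exists 0%N; rewrite (_ : mono_pow m r 0 = 0%MM) ?(coef_row0 C_comodule) //.
  by apply/mnmP => t; rewrite !mnmE; case: ifP.
have w_bounded j : w j != 0 -> (j <= N.-1)%N.
  rewrite -ltnS prednK ?N_gt0 //; apply: contraR; rewrite -leqNgt => Nj.
  by rewrite (coef_row_truncated C_comodule) // r_lt_m.
have [J wJ J_max] := ex_maxnP w0 w_bounded.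
exists J; split => // j Jj; apply/eqP; apply: contraT => wj.
by move: (J_max _ wj); rewrite leqNgt Jj.
Qed.

End FixedVectors.

Unset Implicit Arguments.

Theorem mainTheorem10 (k : fieldType) (p n m : nat)
  (hp : prime p) (hchar : p \in [pchar k]) (hn : (1 <= n)%N) (hm : (1 <= m)%N)
  (d : nat) (C : 'M[{mpoly k[m]}]_d) (hC : is_comodule p n C)
  (i : nat) (hi : (1 <= i <= m)%N)
  (v : 'rV[k]_d) (hv : fixed_by p n C (i - 1) v) (hv0 : v != 0) :
  (forall b, in_sub_vars (m - i) (coaction C v 0 b))
  /\ (exists j : nat, coef_row C v (mono_pow m (m - i) j) != 0
        /\ forall j', (j < j')%N -> coef_row C v (mono_pow m (m - i) j') = 0)
  /\ (forall j : nat, coef_row C v (mono_pow m (m - i) j) != 0 ->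
        (forall j', (j < j')%N -> coef_row C v (mono_pow m (m - i) j') = 0) ->
        fixed_by p n C i (coef_row C v (mono_pow m (m - i) j))
        /\ coef_row C v (mono_pow m (m - i) j) != 0).
Proof.
have p_gt0 := prime_gt0 hp.
split; first exact: (coaction_in_sub_vars hC p_gt0 hi hv).
split; first exact: (exists_top_coef_row hC p_gt0 hi).
by move=> J wJ0 w_top; split => //; apply: (fixed_by_top_coef_row hC p_gt0 hi hv).
Qed.
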